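(* Let $\mathbf{x}_1,\dots,\mathbf{x}_m\in\mathbb{R}^n$ and $y_1,\dots,y_m\in\mathbb{R}$ be such that $y_i=\phi(\mathbf{x}_i)$, $i=1,\dots,m$, for some function $\phi:\mathbb{R}^n\to\mathbb{R}$. Then for every $\varepsilon>0$ there exists a $\mathrm{DLSE}_T$ neural network whose input-output function $d_T$ satisfies $|d_T(\mathbf{x}_i)-y_i|\leqslant\varepsilon$ for $i=1,\dots,m$.
   Context: A $\mathrm{DLSE}_T$ neural network (with temperature $T>0$, $n$ inputs and $K$ hidden nodes in each of its two components, $K$ a positive integer) is specified by vectors $\boldsymbol{\alpha}^{(k)},\boldsymbol{\gamma}^{(k)}\in\mathbb{R}^n$ and reals $\beta_k,\delta_k$, $k=1,\dots,K$, and its input-output function is $$d_T(\mathbf{x})=T\log\Big(\sum_{k=1}^K\exp\big((\langle\boldsymbol{\alpha}^{(k)},\mathbf{x}\rangle+\beta_k)/T\big)\Big)-T\log\Big(\sum_{k=1}^K\exp\big((\langle\boldsymbol{\gamma}^{(k)},\mathbf{x}\rangle+\delta_k)/T\big)\Big),$$ i.e., the difference of two one-hidden-layer networks with hidden activation $s\mapsto\exp(s/T)$, unit weights to the output node, and output activation $s\mapsto T\log s$. *)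

From HB Require Import structures.
From mathcomp Require Import all_boot all_order all_algebra.
From mathcomp Require Import all_classical all_reals all_analysis.
Set Implicit Arguments. Unset Strict Implicit. Unset Printing Implicit Defensive.
Import Order.TTheory GRing.Theory Num.Theory.
Local Open Scope ring_scope.

Definition dotv (R : realType) (n : nat) (u v : 'rV[R]_n) : R :=
  \sum_(j < n) u 0 j * v 0 j.

Definition dlse (R : realType) (n K : nat) (T : R)
    (alpha gamma : 'I_K -> 'rV[R]_n) (beta delta : 'I_K -> R)
    (x : 'rV[R]_n) : R :=
  T * ln (\sum_(k < K) expR ((dotv (alpha k) x + beta k) / T))
  - T * ln (\sum_(k < K) expR ((dotv (gamma k) x + delta k) / T)).

(* Take [T = 1] and one hidden node per data point in each component, with
   weights [2 L x_j] and biases [y_j - L |x_j|^2] resp. [- L |x_j|^2].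
   Completing the square, the common factor [exp (L |x|^2)] cancels and
   [d(x_i) = ln (sum_j exp (y_j - L |x_i - x_j|^2)) - ln (sum_j exp (- L |x_i - x_j|^2))].
   As [L -> +oo] only the indices with [x_j = x_i] survive in both sums, and for
   these [y_j = y_i] because the data come from a function; so [d(x_i) -> y_i]. *)
From HB Require Import structures.
From mathcomp Require Import all_boot all_order all_algebra.
From mathcomp Require Import all_classical all_reals all_analysis.
From mathcomp Require Import ring lra.
Import Order.TTheory GRing.Theory Num.Theory.
Import numFieldNormedType.Exports.
Local Open Scope classical_set_scope.
Local Open Scope ring_scope.

Section SquaredDistance.
Context {R : realType} {n : nat}.
Implicit Types a b : 'rV[R]_n.

Definition sqdist a b : R := dotv (a - b) (a - b).

Lemma sqdist_ge0 a b : 0 <= sqdist a b.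
Proof. by apply: sumr_ge0 => k _; rewrite -expr2 sqr_ge0. Qed.

Lemma sqdist_eq0 a b : (sqdist a b == 0) = (a == b).
Proof.
apply/idP/eqP => [|->]; last by apply/eqP/big1 => k _; rewrite !mxE subrr mul0r.
rewrite psumr_eq0 => [/allP ab0|k _]; last by rewrite -expr2 sqr_ge0.
apply/rowP => k; apply/eqP; rewrite -subr_eq0.
by have := ab0 k (mem_index_enum _); rewrite !mxE mulf_eq0 orbb.
Qed.

Lemma dotv_polarization (L : R) a b :
  dotv ((2 * L) *: a) b - L * dotv a a = L * dotv b b - L * sqdist b a.
Proof.
rewrite /sqdist /dotv !mulr_sumr -!sumrB; apply: eq_bigr => k _.
by rewrite !mxE; ring.
Qed.

End SquaredDistance.

Section GaussianLogSumExp.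
Context {R : realType}.

Lemma sum_expR_gt0 (I : finType) (f : I -> R) (i0 : I) : 0 < \sum_i expR (f i).
Proof.
by rewrite (bigD1 i0) //= ltr_pwDl ?expR_gt0 // sumr_ge0 // => i _; exact: expR_ge0.
Qed.

Lemma expR_penalty_cvg (c D : R) : 0 <= D ->
  expR (c - L * D) @[L --> +oo] --> (if D == 0 then expR c else 0).
Proof.
rewrite le_eqVlt => /predU1P[<-|D_gt0]; rewrite ?eqxx.
  by under eq_fun do rewrite mulr0 subr0; exact: cvg_cst.
rewrite gt_eqF //; apply/cvgrPdist_le => e e_gt0.
near=> L.
rewrite sub0r normrN ger0_norm ?expR_ge0 // -[leRHS]lnK ?posrE // ler_expR.
have : (c - ln e) / D <= L by near: L; apply: nbhs_pinfty_ge; exact: num_real.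
by rewrite ler_pdivrMr //; lra.
Unshelve. all: end_near.
Qed.

(* The terms with [D j > 0] die out and the surviving ones all equal [exp (c i0)]. *)
Lemma ln_sum_expR_penalty_cvg (I : finType) (c D : I -> R) (i0 : I) :
  (forall j, 0 <= D j) -> D i0 = 0 -> (forall j, D j = 0 -> c j = c i0) ->
  ln (\sum_j expR (c j - L * D j)) @[L --> +oo] -->
    c i0 + ln #|[pred j | D j == 0]|%:R.
Proof.
move=> D_ge0 Di0 cD.
have N_gt0 : (0 < #|[pred j | D j == 0%R]|)%N.
  by apply/card_gt0P; exists i0; rewrite inE Di0.
have sum_cvg : \sum_j expR (c j - L * D j) @[L --> +oo] -->
    \sum_j (if D j == 0 then expR (c j) else 0).
  apply: cvg_big => [|j _]; first exact: add_continuous.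
  exact: expR_penalty_cvg.
have limE : \sum_j (if D j == 0 then expR (c j) else 0) =
    expR (c i0) * #|[pred j | D j == 0]|%:R.
  rewrite -big_mkcond /= -sum1_card natr_sum mulr_sumr.
  by apply: eq_bigr => j /eqP /cD ->; rewrite mulr1.
rewrite limE in sum_cvg.
have lim_gt0 : 0 < expR (c i0) * #|[pred j | D j == 0]|%:R.
  by rewrite mulr_gt0 ?expR_gt0 ?ltr0n.
rewrite -[c i0]expRK -lnM ?posrE ?expR_gt0 ?ltr0n //.
exact: continuous_cvg (continuous_ln lim_gt0) sum_cvg.
Qed.

End GaussianLogSumExp.

Lemma dlse_gaussian (R : realType) (n K : nat) (L : R) (a : 'I_K -> 'rV[R]_n)
    (c c' : 'I_K -> R) (z : 'rV[R]_n) : (0 < K)%N ->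
  dlse 1 (fun j => (2 * L) *: a j) (fun j => (2 * L) *: a j)
    (fun j => c j - L * dotv (a j) (a j)) (fun j => c' j - L * dotv (a j) (a j)) z
  = ln (\sum_j expR (c j - L * sqdist z (a j)))
    - ln (\sum_j expR (c' j - L * sqdist z (a j))).
Proof.
move=> K_gt0; pose j0 : 'I_K := Ordinal K_gt0.
have complete_square (b : 'I_K -> R) :
    \sum_j expR ((dotv ((2 * L) *: a j) z + (b j - L * dotv (a j) (a j))) / 1)
    = expR (L * dotv z z) * \sum_j expR (b j - L * sqdist z (a j)).
  rewrite mulr_sumr; apply: eq_bigr => j _.
  by rewrite divr1 -expRD addrCA dotv_polarization; congr expR; ring.
have sum_gt0 (b : 'I_K -> R) : 0 < \sum_j expR (b j - L * sqdist z (a j)).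
  exact: sum_expR_gt0 j0.
rewrite /dlse !complete_square !mul1r !lnM ?posrE ?expR_gt0 ?sum_gt0 //.
by rewrite opprD addrACA subrr add0r.
Qed.

Theorem theorem4 (R : realType) (n m : nat)
    (x : 'I_m -> 'rV[R]_n) (y : 'I_m -> R) (phi : 'rV[R]_n -> R)
    (hy : forall i, y i = phi (x i)) (eps : R) (heps : 0 < eps) :
  exists (T : R) (K : nat), 0 < T /\ (0 < K)%N /\
    exists (alpha gamma : 'I_K -> 'rV[R]_n) (beta delta : 'I_K -> R),
      forall i : 'I_m, `| dlse T alpha gamma beta delta (x i) - y i | <= eps.
Proof.
have [m0|m_gt0] := posnP m.
  exists 1, 1%N; split => //; split => //.
  exists (fun=> 0), (fun=> 0), (fun=> 0), (fun=> 0) => i.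
  by have : (i < 0)%N by rewrite -m0.
pose net L := dlse 1 (fun j => (2 * L) *: x j) (fun j => (2 * L) *: x j)
  (fun j => y j - L * dotv (x j) (x j)) (fun j => 0 - L * dotv (x j) (x j)).
have net_cvg i : net L (x i) @[L --> +oo] --> y i.
  rewrite -[y i]addr0 -(subrr (ln #|[pred j | sqdist (x i) (x j) == 0]|%:R)).
  rewrite addrA -[X in _ - X]add0r.
  under eq_fun do rewrite /net dlse_gaussian //.
  have Dxi : sqdist (x i) (x i) = 0 by apply/eqP; rewrite sqdist_eq0.
  have yD j : sqdist (x i) (x j) = 0 -> y j = y i.
    by move/eqP; rewrite sqdist_eq0 hy => /eqP <-; rewrite hy.
  by apply: cvgB; apply: ln_sum_expR_penalty_cvg (fun j => sqdist_ge0 (x i) (x j)) Dxi _.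
have net_near : \forall L \near +oo, forall i, `|net L (x i) - y i| <= eps.
  apply: filter_forall => i.
  move/cvgrPdist_le : (net_cvg i) => /(_ eps heps); apply: filterS => L.
  by rewrite distrC.
have [L netL] := filter_ex net_near.
by exists 1, m; split => //; split => //; do 4 eexists; exact: netL.
Qed.
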